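(* Let $X=(X,b)$ be a $\mathbb T$-category. The following are equivalent: (i) $X$ is L-complete; (ii) $X$ is L-injective; (iii) the Yoneda functor $y:X\to\tilde X$ has a pseudo left-inverse, i.e. a $\mathbb T$-functor $R:\tilde X\to X$ with $R\cdot y\cong 1_X$.
   Context: Let $\mathsf V=(\mathsf V,\otimes,k)$ be a commutative unital quantale (complete lattice, commutative associative $\otimes$ with neutral $k$, $u\otimes(-)$ preserving suprema), internal hom $z\le u\multimap v\iff z\otimes u\le v$. A $\mathsf V$-relation $r$ from $X$ to $Y$ is a map $X\times Y\to\mathsf V$; composition $(s\cdot r)(x,z)=\bigvee_y r(x,y)\otimes s(y,z)$, converse $r^\circ(y,x)=r(x,y)$, pointwise order; a map $f$ is the relation $f(x,y)=k$ if $f(x)=y$, $\bot$ otherwise. Let $\mathbb T=(T,e,m)$ be a Set-monad with $T1=1$, $T$ sending pullbacks to weak pullbacks and each naturality square of $m$ a weak pullback, and $\xi:T\mathsf V\to\mathsf V$ with $\xi e_{\mathsf V}=1$, $\xi\cdot T\xi=\xi\cdot m_{\mathsf V}$, $\xi\cdot T(\otimes)=\otimes\cdot\langle\xi T\pi_1,\xi T\pi_2\rangle$, $\xi\cdot Tk=k$, and such that $\varphi\mapsto\xi\cdot T\varphi$, $\mathsf V^X\to\mathsf V^{TX}$, is natural w.r.t. the monotone maps $P_{\mathsf V}f:\mathsf V^X\to\mathsf V^Y$, $P_{\mathsf V}f(\varphi)(y)=\bigvee_{f(x)=y}\varphi(x)$ (a strict topological theory). For a relation $r$ from $X$ to $Y$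 let $T_\xi r(\mathfrak x,\mathfrak y)=\bigvee\{\xi(Tr(\mathfrak w))\mid\mathfrak w\in T(X\times Y),T\pi_1\mathfrak w=\mathfrak x,T\pi_2\mathfrak w=\mathfrak y\}$. A $\mathbb T$-relation from $X$ to $Y$ is a $\mathsf V$-relation from $TX$ to $Y$; Kleisli composition $b\circ a=b\cdot T_\xi a\cdot m_X^\circ$. A $\mathbb T$-category $(X,a)$ has $k\le a(e_X(x),x)$ and $a\circ a\le a$; a $\mathbb T$-functor $f:(X,a)\to(Y,b)$ satisfies $a(\mathfrak x,x)\le b(Tf(\mathfrak x),f(x))$; subsets carry $a_M(\mathfrak x,x)=a(Ti(\mathfrak x),x)$. $E=(1,k)$. A $\mathbb T$-module $\varphi:(X,a)\to(Y,b)$ is a $\mathbb T$-relation with $\varphi\circ a\le\varphi$, $b\circ\varphi\le\varphi$ (identity $a$). For a $\mathbb T$-functor $f:Z\to Y$: $f_*(\mathfrak z,y)=b(Tf(\mathfrak z),y)$, $f^*(\mathfrak y,z)=b(\mathfrak y,f(z))$. For modules $\varphi:(Z,c)\to X$, $\psi:X\to Z$, $\varphi\dashv\psi$ means $c\le\psi\circ\varphi$, $\varphi\circ\psi\le a$. $f\le g$ iff $f^*\le g^*$ (equivalently $k\le b(e_Y(f(x)),g(x))$ for all $x$); $f\cong g$ iff $f\le g\le f$. $X$ is L-complete if each adjunction $\varphi\dashv\psi$ ($\varphi:Z\to X$) is $f_*\dashv f^*$ for some $\mathbb T$-functor $f:Z\to X$. $f:(A,a)\to(B,b)$ is fully faithful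 if $a(\mathfrak x,x)=b(Tf(\mathfrak x),f(x))$, L-dense if $f_*\circ f^*=b$, an L-equivalence if both; $X$ is L-injective if for each L-equivalence $i:A\to B$ and $\mathbb T$-functor $h:A\to X$ there is $g:B\to X$ with $g\cdot i\cong h$. Yoneda: $\mathsf V$ is a $\mathbb T$-category with $\hom_\xi(\mathfrak v,v)=\xi(\mathfrak v)\multimap v$; $|X|=(TX,m_X)$; $|X|\multimap\mathsf V$ is the set of $\mathbb T$-functors $|X|\to\mathsf V$ with structure $[m_X,\hom_\xi](\mathfrak p,h)=\bigwedge\{\xi(T\mathrm{ev}(\mathfrak q))\multimap h(m_X(T\pi_1\mathfrak q))\mid\mathfrak q\in T(TX\times(|X|\multimap\mathsf V)),T\pi_2\mathfrak q=\mathfrak p\}$, $\mathrm{ev}(\mathfrak x,\varphi)=\varphi(\mathfrak x)$. With $r(\mathfrak x,\mathfrak y)=\bigvee_{m_X(\mathfrak X)=\mathfrak x}T_\xi b(\mathfrak X,\mathfrak y)$, $X^{\mathrm{op}}=(TX,c)$ with $c(\mathfrak X,\mathfrak y)=T_\xi(r^\circ)(\mathfrak X,e_{TX}(\mathfrak y))$. $\hat X\subseteq|X|\multimap\mathsf V$ consists of those $\psi$ which are also $\mathbb T$-functors $X^{\mathrm{op}}\to\mathsf V$ (induced structure); $y:X\to\hat X$, $y(x)(\mathfrak x)=b(\mathfrak x,x)$. Each $\psi\in\hat X$ is a $\mathbb T$-module $X\to E$; it is tight if this module has a left adjoint; $\tilde X\subseteq\hat X$ is the set of tight elements (induced structure),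 and $y$ lands in $\tilde X$. *)

Unset Implicit Arguments.
Unset Strict Implicit.

Record quantale := Quantale {
  qcar :> Type;
  qle : qcar -> qcar -> Prop;
  qsup : (qcar -> Prop) -> qcar;
  qtens : qcar -> qcar -> qcar;
  qk : qcar;
  qle_refl : forall u, qle u u;
  qle_trans : forall u v w, qle u v -> qle v w -> qle u w;
  qle_antisym : forall u v, qle u v -> qle v u -> u = v;
  qsup_ub : forall (S : qcar -> Prop) u, S u -> qle u (qsup S);
  qsup_least : forall (S : qcar -> Prop) w,
      (forall u, S u -> qle u w) -> qle (qsup S) w;
  qtens_comm : forall u v, qtens u v = qtens v u;
  qtens_assoc : forall u v w, qtens u (qtens v w) = qtens (qtens u v) w;
  qtens_unit : forall u, qtens qk u = u;
  qtens_sup : forall u (S : qcar -> Prop),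
      qtens u (qsup S) = qsup (fun v => exists s, S s /\ v = qtens u s)
}.
Arguments qle {q}. Arguments qsup {q}. Arguments qtens {q}. Arguments qk {q}.

Definition qinf {Q : quantale} (S : Q -> Prop) : Q :=
  qsup (fun v => forall s, S s -> qle v s).
Definition qhom {Q : quantale} (u v : Q) : Q :=
  qsup (fun z => qle (qtens z u) v).

Record monad := Monad {
  T : Type -> Type;
  fmap : forall A B : Type, (A -> B) -> T A -> T B;
  eta : forall A : Type, A -> T A;
  mu : forall A : Type, T (T A) -> T A;
  fmap_id : forall A (x : T A), fmap A A (fun a => a) x = x;
  fmap_comp : forall A B C (f : A -> B) (g : B -> C) (x : T A),
      fmap A C (fun a => g (f a)) x = fmap B C g (fmap A B f x);
  eta_nat : forall A B (f : A -> B) (a : A), fmap A B f (eta A a) = eta B (f a);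
  mu_nat : forall A B (f : A -> B) (X : T (T A)),
      fmap A B f (mu A X) = mu B (fmap (T A) (T B) (fmap A B f) X);
  mu_eta_l : forall A (x : T A), mu A (eta (T A) x) = x;
  mu_eta_r : forall A (x : T A), mu A (fmap A (T A) (eta A) x) = x;
  mu_assoc : forall A (X : T (T (T A))),
      mu A (mu (T A) X) = mu A (fmap (T (T A)) (T A) (mu A) X)
}.
Arguments fmap {m A B}. Arguments eta {m A}. Arguments mu {m A}.

Definition T_one (M : monad) : Prop :=
  (forall u v : T M unit, u = v).

(* T sends (the canonical, hence every) pullback to a weak pullback *)
Definition T_weak_pullbacks (M : monad) : Prop :=
  forall (A B C : Type) (f : A -> C) (g : B -> C) (x : T M A) (y : T M B),
    fmap f x = fmap g y ->
    exists w : T M {p : A * B | f (fst p) = g (snd p)},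
      fmap (fun p => fst (proj1_sig p)) w = x /\
      fmap (fun p => snd (proj1_sig p)) w = y.

(* each naturality square of mu is a weak pullback *)
Definition mu_weak_pullbacks (M : monad) : Prop :=
  forall (A B : Type) (f : A -> B) (a : T M A) (Y : T M (T M B)),
    fmap f a = mu Y ->
    exists W : T M (T M A), mu W = a /\ fmap (fmap f) W = Y.

Section Theory.
Variable Q : quantale.
Variable M : monad.
Local Notation T := (T M).
Variable xi : T Q -> Q.

Definition PV {X Y : Type} (f : X -> Y) (phi : X -> Q) : Y -> Q :=
  fun y => qsup (fun v => exists x, f x = y /\ v = phi x).

Record strict_topological_theory : Prop := {
  xi_eta : forall v : Q, xi (eta v) = v;
  xi_mu : forall W : T (T Q), xi (fmap xi W) = xi (mu W);
  xi_tens : forall w : T (Q * Q),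
      xi (fmap (fun p => qtens (fst p) (snd p)) w)
      = qtens (xi (fmap fst w)) (xi (fmap snd w));
  xi_k : forall u : T unit, xi (fmap (fun _ => qk) u) = qk;
  xi_nat : forall (X Y : Type) (f : X -> Y) (phi : X -> Q) (y : T Y),
      xi (fmap (PV f phi) y) = PV (fmap f) (fun x => xi (fmap phi x)) y
}.

Definition vrel (X Y : Type) := X -> Y -> Q.
Definition rcomp {X Y Z} (r : vrel X Y) (s : vrel Y Z) : vrel X Z :=
  fun x z => qsup (fun v => exists y, v = qtens (r x y) (s y z)).
Definition rconv {X Y} (r : vrel X Y) : vrel Y X := fun y x => r x y.
(* a map as a relation: k if f x = y, bottom (= sup of the empty set) otherwise *)
Definition rmap {X Y} (f : X -> Y) : vrel X Y :=
  fun x y => qsup (fun v => f x = y /\ v = qk).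
Definition rle {X Y} (r s : vrel X Y) : Prop := forall x y, qle (r x y) (s x y).

Definition Txi {X Y} (r : vrel X Y) : vrel (T X) (T Y) :=
  fun x y => qsup (fun v => exists w : T (X * Y),
     fmap fst w = x /\ fmap snd w = y /\ v = xi (fmap (fun p => r (fst p) (snd p)) w)).

(* Kleisli composition  b o a = b . T_xi a . m_X^o  (written kcomp a b) *)
Definition kcomp {X Y Z} (a : vrel (T X) Y) (b : vrel (T Y) Z) : vrel (T X) Z :=
  rcomp (rcomp (rconv (rmap (@mu M X))) (Txi a)) b.

Record Tgraph := Tgr { tcar : Type; tstr : vrel (T tcar) tcar }.

Definition is_Tcat (X : Tgraph) : Prop :=
  (forall x, qle qk (tstr X (eta x) x)) /\
  rle (kcomp (tstr X) (tstr X)) (tstr X).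

Definition Tfunctor (X Y : Tgraph) (f : tcar X -> tcar Y) : Prop :=
  forall (x : T (tcar X)) (x' : tcar X), qle (tstr X x x') (tstr Y (fmap f x) (f x')).

Definition subgraph (X : Tgraph) (P : tcar X -> Prop) : Tgraph :=
  Tgr {x | P x} (fun (x : T {x | P x}) (x' : {x | P x}) =>
         tstr X (fmap (@proj1_sig _ _) x) (proj1_sig x')).

Definition E : Tgraph := Tgr unit (fun (_ : T unit) (_ : unit) => qk).

Definition is_module (X Y : Tgraph) (phi : vrel (T (tcar X)) (tcar Y)) : Prop :=
  rle (kcomp (tstr X) phi) phi /\ rle (kcomp phi (tstr Y)) phi.

Definition flow (Z Y : Tgraph) (f : tcar Z -> tcar Y) : vrel (T (tcar Z)) (tcar Y) :=
  fun z y => tstr Y (fmap f z) y.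
Definition fup (Z Y : Tgraph) (f : tcar Z -> tcar Y) : vrel (T (tcar Y)) (tcar Z) :=
  fun y z => tstr Y y (f z).

(* phi -| psi for phi : Z -> X, psi : X -> Z *)
Definition adjoint (Z X : Tgraph) (phi : vrel (T (tcar Z)) (tcar X))
  (psi : vrel (T (tcar X)) (tcar Z)) : Prop :=
  rle (tstr Z) (kcomp phi psi) /\ rle (kcomp psi phi) (tstr X).

Definition fle (X Y : Tgraph) (f g : tcar X -> tcar Y) : Prop :=
  rle (fup X Y f) (fup X Y g).
Definition fiso (X Y : Tgraph) (f g : tcar X -> tcar Y) : Prop :=
  fle X Y f g /\ fle X Y g f.

Definition L_complete (X : Tgraph) : Prop :=
  forall (Z : Tgraph), is_Tcat Z ->
  forall (phi : vrel (T (tcar Z)) (tcar X)) (psi : vrel (T (tcar X)) (tcar Z)),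
    is_module Z X phi -> is_module X Z psi -> adjoint Z X phi psi ->
    exists f : tcar Z -> tcar X, Tfunctor Z X f /\
      (forall z x, phi z x = flow Z X f z x) /\
      (forall x z, psi x z = fup Z X f x z).

Definition fully_faithful (A B : Tgraph) (f : tcar A -> tcar B) : Prop :=
  forall x x', tstr A x x' = tstr B (fmap f x) (f x').
Definition L_dense (A B : Tgraph) (f : tcar A -> tcar B) : Prop :=
  forall y y', kcomp (fup A B f) (flow A B f) y y' = tstr B y y'.
Definition L_equivalence (A B : Tgraph) (f : tcar A -> tcar B) : Prop :=
  fully_faithful A B f /\ L_dense A B f.

Definition L_injective (X : Tgraph) : Prop :=
  forall (A B : Tgraph), is_Tcat A -> is_Tcat B ->
  forall i : tcar A -> tcar B, Tfunctor A B i -> L_equivalence A B i ->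
  forall h : tcar A -> tcar X, Tfunctor A X h ->
  exists g : tcar B -> tcar X, Tfunctor B X g /\ fiso A X (fun a => g (i a)) h.

Definition Vgraph : Tgraph := Tgr Q (fun (v : T Q) (v' : Q) => qhom (xi v) v').

Definition absT (X : Tgraph) : Tgraph := Tgr (T (tcar X)) (rmap (@mu M (tcar X))).

Definition homV_car (X : Tgraph) : Type :=
  {h : T (tcar X) -> Q | Tfunctor (absT X) Vgraph h}.

Definition ev {X : Tgraph} (p : T (tcar X) * homV_car X) : Q :=
  proj1_sig (snd p) (fst p).

(* |X| -o V with structure [m_X, hom_xi] *)
Definition homV (X : Tgraph) : Tgraph :=
  Tgr (homV_car X) (fun (p : T (homV_car X)) (h : homV_car X) =>
    qinf (fun v => exists q : T (T (tcar X) * homV_car X),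
            fmap snd q = p /\
            v = qhom (xi (fmap (@ev X) q)) (proj1_sig h (mu (fmap fst q))))).

Definition op_r (X : Tgraph) : vrel (T (tcar X)) (T (tcar X)) :=
  fun x y => qsup (fun v => exists XX : T (T (tcar X)), mu XX = x /\ v = Txi (tstr X) XX y).
Definition Xop (X : Tgraph) : Tgraph :=
  Tgr (T (tcar X)) (fun (XX : T (T (tcar X))) (y : T (tcar X)) => Txi (rconv (op_r X)) XX (eta y)).

Definition Xhat (X : Tgraph) : Tgraph :=
  subgraph (homV X) (fun psi => Tfunctor (Xop X) Vgraph (proj1_sig psi)).

(* psi in Xhat viewed as a T-relation X -> E *)
Definition as_module (X : Tgraph) (psi : tcar (Xhat X)) : vrel (T (tcar X)) unit :=
  fun x _ => proj1_sig (proj1_sig psi) x.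

Definition tight (X : Tgraph) (psi : tcar (Xhat X)) : Prop :=
  exists phi : vrel (T unit) (tcar X),
    is_module E X phi /\ adjoint E X phi (as_module X psi).

Definition Xtilde (X : Tgraph) : Tgraph := subgraph (Xhat X) (tight X).

Definition tilde_fun (X : Tgraph) (w : tcar (Xtilde X)) : T (tcar X) -> Q :=
  proj1_sig (proj1_sig (proj1_sig w)).
Definition yoneda (X : Tgraph) (x : tcar X) : T (tcar X) -> Q :=
  fun xx => tstr X xx x.

End Theory.

(* (i) => (ii): for an L-equivalence i : A -> B and a T-functor h : A -> X, the
   modules i^* . h_* : B -> X and h^* . i_* are adjoint (density of i gives the
   unit, full faithfulness the counit), so L-completeness represents them by some
   g : B -> X, and full faithfulness of i once more gives g . i = h up to iso.
   (ii) => (iii): the Yoneda functor y : X -> X~ is an L-equivalence, so the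
   identity of X extends along it.
   (iii) => (i): if R . y is isomorphic to 1, every tight presheaf w is
   represented by R w.  Given phi -| psi with phi : Z -> X, each column
   psi(-, z) is tight, so psi = f^* for f z := R psi(-, z), and then phi = f_*
   by uniqueness of left adjoints. *)

From Pilot Require Import Defs.
From Stdlib Require Import FunctionalExtensionality Setoid.

Arguments qle_refl {q} u.
Arguments qle_trans {q} u v w.
Arguments qle_antisym {q} u v.
Arguments qsup_ub {q} S u.
Arguments qsup_least {q} S w.
Arguments qtens_comm {q} u v.
Arguments qtens_assoc {q} u v w.
Arguments qtens_unit {q} u.
Arguments qtens_sup {q} u S.

Local Notation "u ⊑ v" := (qle u v) (at level 70).
Local Notation "u ⊗ v" := (qtens u v) (at level 40, left associativity).

(** * Quantales *)

Section Quantale.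
Variable Q : quantale.
Implicit Types (u v w z : Q) (S : Q -> Prop).

Lemma qtens_unit_r u : u ⊗ qk = u.
Proof. rewrite qtens_comm; apply qtens_unit. Qed.

Lemma qtens_mono_r u v v' : v ⊑ v' -> u ⊗ v ⊑ u ⊗ v'.
Proof.
  intros Hv. assert (Hsup : v' = qsup (fun t => t = v \/ t = v')).
  { apply qle_antisym; [apply qsup_ub; auto|].
    apply qsup_least; intros t [-> | ->]; auto using qle_refl. }
  rewrite Hsup, qtens_sup. apply qsup_ub. exists v; auto.
Qed.

Lemma qtens_mono_l u u' v : u ⊑ u' -> u ⊗ v ⊑ u' ⊗ v.
Proof. intros; rewrite (qtens_comm u), (qtens_comm u'); apply qtens_mono_r; auto. Qed.

Lemma qtens_mono u u' v v' : u ⊑ u' -> v ⊑ v' -> u ⊗ v ⊑ u' ⊗ v'.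
Proof.
  intros; eapply qle_trans; [apply qtens_mono_l; eauto | apply qtens_mono_r; auto].
Qed.

Lemma qtens_sup_le_r u S w : (forall s, S s -> u ⊗ s ⊑ w) -> u ⊗ qsup S ⊑ w.
Proof. intros; rewrite qtens_sup; apply qsup_least; intros v [s [Hs ->]]; auto. Qed.

Lemma qtens_sup_le_l u S w : (forall s, S s -> s ⊗ u ⊑ w) -> qsup S ⊗ u ⊑ w.
Proof.
  intros; rewrite qtens_comm; apply qtens_sup_le_r; intros; rewrite qtens_comm; auto.
Qed.

Lemma qhom_intro z u v : z ⊗ u ⊑ v -> z ⊑ qhom u v.
Proof. intros; apply qsup_ub; auto. Qed.

Lemma qhom_elim z u v : z ⊑ qhom u v -> z ⊗ u ⊑ v.
Proof.
  intros; eapply qle_trans; [apply qtens_mono_l; eauto|].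
  apply qtens_sup_le_l; auto.
Qed.

Lemma qinf_intro z S : (forall s, S s -> z ⊑ s) -> z ⊑ qinf S.
Proof. intros; apply qsup_ub; auto. Qed.

Lemma qinf_lb S s : S s -> qinf S ⊑ s.
Proof. intros; apply qsup_least; auto. Qed.

End Quantale.

(** * The monad *)

Section Monad.
Variable M : monad.
Hypothesis HT1 : T_one M.
Hypothesis Hwpb : T_weak_pullbacks M.
Hypothesis Hmu : mu_weak_pullbacks M.
Local Notation TT := (T M).

Lemma fmap_ext A B (f g : A -> B) (x : TT A) :
  (forall a, f a = g a) -> fmap f x = fmap g x.
Proof. intros Hfg; apply functional_extensionality in Hfg; subst; auto. Qed.

Lemma fmap_fmap A B C (f : A -> B) (g : B -> C) (x : TT A) :
  fmap g (fmap f x) = fmap (fun a => g (f a)) x.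
Proof. symmetry; apply fmap_comp. Qed.

Lemma fmap_const A B (c : B) (x : TT A) : fmap (fun _ => c) x = eta c.
Proof.
  rewrite (fmap_comp M A unit B (fun _ => tt) (fun _ => c) x).
  rewrite (HT1 (fmap (fun _ => tt) x) (eta tt)). apply eta_nat.
Qed.

Lemma TTunit_eq (W W' : TT (TT unit)) : W = W'.
Proof.
  assert (Heta : forall V : TT (TT unit), V = eta (eta tt)).
  { intros V. rewrite <- (fmap_id M _ V), (fmap_ext _ _ _ (fun _ => eta tt));
      [apply fmap_const | intros; apply HT1]. }
  rewrite (Heta W), (Heta W'); auto.
Qed.

Lemma mu_eq_eta A (W : TT (TT A)) (z : A) : mu W = eta z -> W = eta (eta z).
Proof.
  intros HW. destruct (Hmu unit A (fun _ => z) (eta tt) W) as [V [_ HV]].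
  { rewrite eta_nat; auto. }
  rewrite <- HV, (TTunit_eq V (eta (eta tt))), !eta_nat; auto.
Qed.

Lemma fmap_fiber_eta A B (g : A -> B) (q : TT A) (c : B) :
  fmap g q = eta c -> exists W : TT {a | g a = c}, fmap (@proj1_sig _ _) W = q.
Proof.
  intros Hq. destruct (Hwpb A unit B g (fun _ => c) q (eta tt)) as [w [Hw _]].
  { rewrite eta_nat; auto. }
  exists (fmap (fun p => exist (fun a => g a = c) (fst (proj1_sig p)) (proj2_sig p)) w).
  rewrite fmap_fmap; auto.
Qed.

Lemma fmap_ext_fiber_eta A B C (g : A -> B) (q : TT A) (c : B) (h h' : A -> C) :
  fmap g q = eta c -> (forall a, g a = c -> h a = h' a) -> fmap h q = fmap h' q.
Proof.
  intros Hq Hh. destruct (fmap_fiber_eta _ _ _ _ _ Hq) as [W <-].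
  rewrite !fmap_fmap. apply fmap_ext. intros [a Ha]; simpl; auto.
Qed.

End Monad.

(** * The lax extension and Kleisli composition *)

Section LaxExtension.
Variable Q : quantale.
Variable M : monad.
Variable xi : T M Q -> Q.
Hypothesis HT1 : T_one M.
Hypothesis Hwpb : T_weak_pullbacks M.
Hypothesis Hmu : mu_weak_pullbacks M.
Hypothesis Hxi : strict_topological_theory Q M xi.

Local Notation TT := (T M).
Local Notation Tx r := (Txi Q M xi r).
Local Notation kc a b := (kcomp Q M xi a b).
Local Notation ua r := (fun p => r (fst p) (snd p)).

Lemma xi_const A (u : Q) (x : TT A) : xi (fmap (fun _ => u) x) = u.
Proof. rewrite fmap_const by auto; apply (xi_eta _ _ _ Hxi). Qed.

Lemma xi_fmap_tens A (f g : A -> Q) (x : TT A) :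
  xi (fmap (fun a => f a ⊗ g a) x) = xi (fmap f x) ⊗ xi (fmap g x).
Proof.
  pose proof (xi_tens _ _ _ Hxi (fmap (fun a => (f a, g a)) x)) as Hx.
  rewrite !fmap_fmap in Hx. exact Hx.
Qed.

Lemma xi_tens_const A (u : Q) (g : A -> Q) (x : TT A) :
  xi (fmap (fun a => u ⊗ g a) x) = u ⊗ xi (fmap g x).
Proof. rewrite (xi_fmap_tens _ (fun _ => u)), xi_const; auto. Qed.

(* Monotonicity of [xi] comes from its naturality for [PV] along the codiagonal
   [A + A -> A], which turns [g] into the join of [f] and [g]. *)
Lemma xi_mono A (f g : A -> Q) (x : TT A) :
  (forall a, f a ⊑ g a) -> xi (fmap f x) ⊑ xi (fmap g x).
Proof.
  intros Hfg.
  set (s := fun p : A + A => match p with inl a => a | inr a => a end).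
  set (h := fun p : A + A => match p with inl a => f a | inr a => g a end).
  assert (Hjoin : forall a, PV Q s h a = g a).
  { intro a. apply qle_antisym.
    - apply qsup_least. intros v [p [Hp ->]].
      destruct p; simpl in *; subst; [apply Hfg | apply qle_refl].
    - apply qsup_ub. exists (inr a). auto. }
  rewrite (fmap_ext _ _ _ g (PV Q s h)) by (intro; rewrite Hjoin; auto).
  rewrite (xi_nat _ _ _ Hxi).
  apply qsup_ub. exists (fmap inl x). split.
  - rewrite fmap_fmap; apply (fmap_id M).
  - rewrite fmap_fmap; reflexivity.
Qed.

Lemma xi_ge_k A (f : A -> Q) (x : TT A) : (forall a, qk ⊑ f a) -> qk ⊑ xi (fmap f x).
Proof.
  intros Hf. rewrite <- (xi_const A qk x) at 1. apply xi_mono; auto.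
Qed.

Lemma Txi_ub A B (r : vrel Q A B) (w : TT (A * B)) x y :
  fmap fst w = x -> fmap snd w = y -> xi (fmap (ua r) w) ⊑ Tx r x y.
Proof. intros; apply qsup_ub; exists w; auto. Qed.

Lemma Txi_le A B (r : vrel Q A B) x y u :
  (forall w, fmap fst w = x -> fmap snd w = y -> xi (fmap (ua r) w) ⊑ u) ->
  Tx r x y ⊑ u.
Proof. intros Hw; apply qsup_least; intros v [w [H1 [H2 ->]]]; auto. Qed.

Lemma Txi_le_tens A B (r : vrel Q A B) x y s u :
  (forall w, fmap fst w = x -> fmap snd w = y -> xi (fmap (ua r) w) ⊗ s ⊑ u) ->
  Tx r x y ⊗ s ⊑ u.
Proof. intros Hw; apply qtens_sup_le_l; intros v [w [H1 [H2 ->]]]; auto. Qed.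

Lemma Txi_mono A B (r s : vrel Q A B) x y :
  (forall a b, r a b ⊑ s a b) -> Tx r x y ⊑ Tx s x y.
Proof.
  intros Hrs. apply Txi_le; intros w H1 H2.
  eapply qle_trans; [|apply (Txi_ub _ _ s w); auto]. apply xi_mono; auto.
Qed.

Lemma Txi_eta A B (r : vrel Q A B) a c : r a c ⊑ Tx r (eta a) (eta c).
Proof.
  eapply qle_trans; [|apply (Txi_ub _ _ r (eta (a, c))); apply eta_nat].
  rewrite eta_nat, (xi_eta _ _ _ Hxi). apply qle_refl.
Qed.

Lemma Txi_pair A B C (e : A -> B) (f : A -> C) (g : A -> Q) (r : vrel Q B C) x :
  (forall a, g a ⊑ r (e a) (f a)) -> xi (fmap g x) ⊑ Tx r (fmap e x) (fmap f x).
Proof.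
  intros Hg. eapply qle_trans; [|apply (Txi_ub _ _ r (fmap (fun a => (e a, f a)) x))].
  - rewrite fmap_fmap. apply xi_mono; auto.
  - rewrite fmap_fmap; auto.
  - rewrite fmap_fmap; auto.
Qed.

Lemma Txi_pair_id A B (e : A -> B) (g : A -> Q) (r : vrel Q B A) x :
  (forall a, g a ⊑ r (e a) a) -> xi (fmap g x) ⊑ Tx r (fmap e x) x.
Proof.
  intros Hg. rewrite <- (fmap_id M _ x) at 3. apply (Txi_pair _ _ _ e (fun a => a)); auto.
Qed.

Lemma Txi_eta_l A B (r : vrel Q A B) a y : Tx r (eta a) y = xi (fmap (r a) y).
Proof.
  apply qle_antisym.
  - apply Txi_le; intros w H1 H2.
    rewrite (fmap_ext_fiber_eta _ Hwpb _ _ _ fst w a _ (fun p => r a (snd p))) by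
      (auto; intros p <-; auto).
    rewrite <- H2, fmap_fmap. apply qle_refl.
  - eapply qle_trans; [|apply (Txi_ub _ _ r (fmap (fun b => (a, b)) y))].
    + rewrite fmap_fmap. apply qle_refl.
    + rewrite fmap_fmap; simpl; apply fmap_const; auto.
    + rewrite fmap_fmap; apply (fmap_id M).
Qed.

Lemma Txi_eta_r A B (r : vrel Q A B) x c : Tx r x (eta c) = xi (fmap (fun a => r a c) x).
Proof.
  apply qle_antisym.
  - apply Txi_le; intros w H1 H2.
    rewrite (fmap_ext_fiber_eta _ Hwpb _ _ _ snd w c _ (fun p => r (fst p) c)) by
      (auto; intros p <-; auto).
    rewrite <- H1, fmap_fmap. apply qle_refl.
  - eapply qle_trans; [|apply (Txi_ub _ _ r (fmap (fun b => (b, c)) x))].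
    + rewrite fmap_fmap. apply qle_refl.
    + rewrite fmap_fmap; apply (fmap_id M).
    + rewrite fmap_fmap; simpl; apply fmap_const; auto.
Qed.

Lemma Txi_unit_r A (r : vrel Q A unit) x u : Tx r x u = xi (fmap (fun a => r a tt) x).
Proof.
  apply qle_antisym.
  - apply Txi_le; intros w H1 H2.
    rewrite <- H1, fmap_fmap. apply xi_mono. intros [a []]; apply qle_refl.
  - eapply qle_trans; [|apply (Txi_ub _ _ r (fmap (fun a => (a, tt)) x))].
    + rewrite fmap_fmap. apply qle_refl.
    + rewrite fmap_fmap; apply (fmap_id M).
    + apply HT1.
Qed.

Lemma Txi_fmap A B A' B' (r : vrel Q A' B') (f : A -> A') (g : B -> B') x y :
  Tx (fun a b => r (f a) (g b)) x y ⊑ Tx r (fmap f x) (fmap g y).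
Proof.
  apply Txi_le; intros w H1 H2.
  eapply qle_trans; [|apply (Txi_ub _ _ r (fmap (fun p => (f (fst p), g (snd p))) w))].
  - rewrite fmap_fmap. apply qle_refl.
  - rewrite fmap_fmap, <- H1, fmap_fmap; auto.
  - rewrite fmap_fmap, <- H2, fmap_fmap; auto.
Qed.

Lemma Txi_fmap_l A B A' (r : vrel Q A' B) (f : A -> A') x y :
  Tx (fun a b => r (f a) b) x y ⊑ Tx r (fmap f x) y.
Proof.
  rewrite <- (fmap_id M _ y) at 2. apply (Txi_fmap _ _ _ _ r f (fun b => b)).
Qed.

Lemma Txi_fmap_r A B B' (r : vrel Q A B') (g : B -> B') x y :
  Tx (fun a b => r a (g b)) x y ⊑ Tx r x (fmap g y).
Proof.
  rewrite <- (fmap_id M _ x) at 2. apply (Txi_fmap _ _ _ _ r (fun a => a) g).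
Qed.

Lemma Txi_const_l_le A B (g : B -> Q) x y :
  Tx (fun (_ : A) b => g b) x y ⊑ xi (fmap g y).
Proof. apply Txi_le; intros w _ H2. rewrite <- H2, fmap_fmap. apply qle_refl. Qed.

Lemma Txi_const_l B (g : B -> Q) (x : TT (TT unit)) y :
  Tx (fun (_ : TT unit) b => g b) x y = xi (fmap g y).
Proof.
  apply qle_antisym; [apply Txi_const_l_le|].
  eapply qle_trans; [|apply (Txi_ub _ _ _ (fmap (fun b => (eta tt, b)) y))].
  - rewrite fmap_fmap. apply qle_refl.
  - apply TTunit_eq; auto.
  - rewrite fmap_fmap; apply (fmap_id M).
Qed.

Lemma Txi_const_k A B (x : TT A) (y : TT B) : Tx (fun _ _ => qk) x y ⊑ qk.
Proof. apply Txi_le; intros w _ _. rewrite xi_const. apply qle_refl. Qed.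

Definition sharp {A B} (a : vrel Q (TT A) B) : vrel Q (TT A) (TT B) :=
  rcomp Q (rconv Q (rmap Q (@mu M A))) (Tx a).

Lemma sharp_ub A B (a : vrel Q (TT A) B) X x y : mu X = x -> Tx a X y ⊑ sharp a x y.
Proof.
  intros HX. eapply qle_trans; [|apply qsup_ub; exists X; reflexivity].
  rewrite <- (qtens_unit (Tx a X y)) at 1. apply qtens_mono_l.
  apply qsup_ub. split; auto.
Qed.

Lemma sharp_le_tens A B (a : vrel Q (TT A) B) x y s u :
  (forall X, mu X = x -> Tx a X y ⊗ s ⊑ u) -> sharp a x y ⊗ s ⊑ u.
Proof.
  intros HX. apply qtens_sup_le_l. intros v [X ->]. rewrite <- qtens_assoc.
  apply qtens_sup_le_l. intros t [Hm ->]. rewrite qtens_unit; auto.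
Qed.

Lemma sharp_le A B (a : vrel Q (TT A) B) x y u :
  (forall X, mu X = x -> Tx a X y ⊑ u) -> sharp a x y ⊑ u.
Proof.
  intros HX. rewrite <- (qtens_unit_r _ (sharp a x y)). apply sharp_le_tens.
  intros; rewrite qtens_unit_r; auto.
Qed.

Lemma kcomp_ub A B C (a : vrel Q (TT A) B) (b : vrel Q (TT B) C) x y z :
  sharp a x y ⊗ b y z ⊑ kc a b x z.
Proof. apply qsup_ub. exists y; auto. Qed.

Lemma kcomp_le A B C (a : vrel Q (TT A) B) (b : vrel Q (TT B) C) x z u :
  (forall y, sharp a x y ⊗ b y z ⊑ u) -> kc a b x z ⊑ u.
Proof. intros Hy. apply qsup_least; intros v [y ->]; apply Hy. Qed.

Lemma kcomp_ub_Txi A B C (a : vrel Q (TT A) B) (b : vrel Q (TT B) C) X x y z :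
  mu X = x -> Tx a X y ⊗ b y z ⊑ kc a b x z.
Proof.
  intros HX. eapply qle_trans; [|apply kcomp_ub]. apply qtens_mono_l, sharp_ub; auto.
Qed.

Lemma kcomp_le_Txi A B C (a : vrel Q (TT A) B) (b : vrel Q (TT B) C) x z u :
  (forall X y, mu X = x -> Tx a X y ⊗ b y z ⊑ u) -> kc a b x z ⊑ u.
Proof. intros HX. apply kcomp_le; intros y. apply sharp_le_tens; eauto. Qed.

Lemma kcomp_mono_l A B C (a a' : vrel Q (TT A) B) (b : vrel Q (TT B) C) x z :
  (forall x y, a x y ⊑ a' x y) -> kc a b x z ⊑ kc a' b x z.
Proof.
  intros Ha. apply kcomp_le_Txi; intros X y HX. eapply qle_trans; [|apply kcomp_ub_Txi; eauto].
  apply qtens_mono_l, Txi_mono; auto.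
Qed.

Lemma kcomp_mono_r A B C (a : vrel Q (TT A) B) (b b' : vrel Q (TT B) C) x z :
  (forall x y, b x y ⊑ b' x y) -> kc a b x z ⊑ kc a b' x z.
Proof.
  intros Hb. apply kcomp_le; intros y. eapply qle_trans; [|apply kcomp_ub].
  apply qtens_mono_r; auto.
Qed.

Lemma kcomp_ext_r A B C C' (a : vrel Q (TT A) B) (b : vrel Q (TT B) C)
  (b' : vrel Q (TT B) C') x z z' :
  (forall y, b y z = b' y z') -> kc a b x z = kc a b' x z'.
Proof.
  intros Hb. apply qle_antisym; apply kcomp_le; intros y;
    [rewrite Hb | rewrite <- Hb]; apply kcomp_ub.
Qed.

(* The triangle of weak pullbacks: [mu] against [T snd] (from [Hmu]) and then
   [T (T snd)] against [T fst] (from [Hwpb]) glue the two witnesses. *)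
Lemma sharp_kcomp_ge A B C (a : vrel Q (TT A) B) (b : vrel Q (TT B) C) x y z :
  sharp a x y ⊗ sharp b y z ⊑ sharp (kc a b) x z.
Proof.
  apply sharp_le_tens; intros X HX. rewrite qtens_comm; apply sharp_le_tens; intros Y HY.
  rewrite qtens_comm; apply Txi_le_tens; intros w1 H1 H2.
  rewrite qtens_comm; apply Txi_le_tens; intros w2 H3 H4. rewrite qtens_comm.
  destruct (Hmu _ _ snd w1 (fmap fst w2)) as [W1 [HW1 HW2]].
  { rewrite H2, H3, HY; auto. }
  destruct (Hwpb _ _ _ (fmap snd) fst W1 w2 HW2) as [Om [HO1 HO2]].
  set (w := fmap (fun o => (mu (fmap fst (fst (proj1_sig o))), snd (snd (proj1_sig o)))) Om).
  eapply qle_trans; [|apply (sharp_ub _ _ _ (fmap fst w))].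
  2: { transitivity (mu (fmap mu (fmap (fmap fst) W1))).
       { f_equal. unfold w. rewrite <- HO1, !fmap_fmap. reflexivity. }
       rewrite <- mu_assoc, <- mu_nat, HW1, H1; auto. }
  eapply qle_trans; [|apply (Txi_ub _ _ _ w); auto].
  2: { unfold w. rewrite fmap_fmap, <- H4, <- HO2, fmap_fmap. reflexivity. }
  assert (Hxi_a : xi (fmap (ua a) w1)
               = xi (fmap (fun o => xi (fmap (ua a) (fst (proj1_sig o)))) Om)).
  { rewrite <- HW1, mu_nat, <- (xi_mu _ _ _ Hxi), fmap_fmap, <- HO1, fmap_fmap.
    reflexivity. }
  assert (Hxi_b : xi (fmap (ua b) w2) = xi (fmap (fun o => ua b (snd (proj1_sig o))) Om)).
  { rewrite <- HO2, fmap_fmap. reflexivity. }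
  rewrite Hxi_a, Hxi_b, <- xi_fmap_tens. unfold w. rewrite fmap_fmap. apply xi_mono.
  intros [[rho [y' c]] Hr]; simpl in *.
  eapply qle_trans; [|apply (kcomp_ub_Txi _ _ _ a b (fmap fst rho)); reflexivity].
  apply qtens_mono_l. apply Txi_ub; auto.
Qed.

Definition kfactor (A B C : Type) : Type :=
  {r : (TT A * C) * TT (TT A * B) | mu (fmap fst (snd r)) = fst (fst r)}.

(* [kc a b], written as a [PV]-image so that naturality of [xi] applies to it. *)
Lemma kcomp_PV A B C (a : vrel Q (TT A) B) (b : vrel Q (TT B) C) p :
  kc a b (fst p) (snd p)
  = PV Q (fun r : kfactor A B C => fst (proj1_sig r))
      (fun r => xi (fmap (ua a) (snd (proj1_sig r)))
                ⊗ b (fmap snd (snd (proj1_sig r))) (snd (fst (proj1_sig r)))) p.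
Proof.
  destruct p as [x c]; simpl. apply qle_antisym.
  - apply kcomp_le_Txi; intros X y HX. apply Txi_le_tens; intros w H1 H2.
    assert (Hw : mu (fmap fst w) = x) by (rewrite H1; auto).
    apply qsup_ub. exists (exist _ ((x, c), w) Hw : kfactor A B C).
    simpl. rewrite H2. auto.
  - apply qsup_least; intros v [[[p0 w] Hw] [Hp ->]]; simpl in *; subst p0.
    eapply qle_trans; [|apply (kcomp_ub_Txi _ _ _ a b (fmap fst w)); exact Hw].
    apply qtens_mono_l. apply Txi_ub; auto.
Qed.

Lemma sharp_kcomp_le A B C (a : vrel Q (TT A) B) (b : vrel Q (TT B) C) x z :
  sharp (kc a b) x z ⊑ qsup (fun v => exists y, v = sharp a x y ⊗ sharp b y z).
Proof.
  apply sharp_le; intros X HX. apply Txi_le; intros w H1 H2.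
  rewrite (fmap_ext _ _ _ _ _ w (kcomp_PV A B C a b)), (xi_nat _ _ _ Hxi).
  apply qsup_least; intros v [Om [HOm ->]].
  set (W := mu (fmap (fun r : kfactor A B C => snd (proj1_sig r)) Om)).
  eapply qle_trans; [|apply qsup_ub; exists (fmap snd W); reflexivity].
  rewrite xi_fmap_tens. apply qtens_mono.
  - assert (Hxi_W : xi (fmap (fun r : kfactor A B C => xi (fmap (ua a) (snd (proj1_sig r)))) Om)
                 = xi (fmap (ua a) W)).
    { unfold W. rewrite mu_nat, <- (xi_mu _ _ _ Hxi), !fmap_fmap. reflexivity. }
    rewrite Hxi_W. eapply qle_trans; [apply (Txi_ub _ _ _ W); reflexivity|].
    apply sharp_ub.
    unfold W. rewrite mu_nat, mu_assoc, !fmap_fmap.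
    transitivity (mu (fmap (fun r : kfactor A B C => fst (fst (proj1_sig r))) Om)).
    + f_equal. apply fmap_ext. intros [r Hr]; auto.
    + rewrite <- (fmap_fmap _ _ _ _ (fun r : kfactor A B C => fst (proj1_sig r)) fst).
      rewrite HOm, H1; auto.
  - eapply qle_trans;
      [|apply (sharp_ub _ _ _ (fmap (fun r : kfactor A B C => fmap snd (snd (proj1_sig r))) Om))].
    + eapply qle_trans; [|apply (Txi_ub _ _ _
        (fmap (fun r : kfactor A B C =>
                 (fmap snd (snd (proj1_sig r)), snd (fst (proj1_sig r)))) Om))].
      * rewrite fmap_fmap. apply qle_refl.
      * rewrite fmap_fmap. reflexivity.
      * rewrite fmap_fmap, <- H2, <- HOm, fmap_fmap. reflexivity.
    + unfold W. rewrite mu_nat, fmap_fmap. reflexivity.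
Qed.

Lemma kcomp_assoc A B C D (a : vrel Q (TT A) B) (b : vrel Q (TT B) C)
  (c : vrel Q (TT C) D) x u :
  kc (kc a b) c x u = kc a (kc b c) x u.
Proof.
  apply qle_antisym.
  - apply kcomp_le; intros zz. eapply qle_trans; [apply qtens_mono_l, sharp_kcomp_le|].
    apply qtens_sup_le_l; intros v [y ->]. rewrite <- qtens_assoc.
    eapply qle_trans; [|apply (kcomp_ub _ _ _ a (kc b c) x y)]. apply qtens_mono_r, kcomp_ub.
  - apply kcomp_le; intros y. apply qtens_sup_le_r; intros s [zz ->]. rewrite qtens_assoc.
    eapply qle_trans; [|apply kcomp_ub]. apply qtens_mono_l, sharp_kcomp_ge.
Qed.

(** * T-categories, modules and representable modules *)

Local Notation tc G := (tcar Q M G).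
Local Notation ts G := (tstr Q M G).
Local Notation Tcat G := (is_Tcat Q M xi G).
Local Notation fu G H f := (fup Q M G H f).
Local Notation fl G H f := (flow Q M G H f).

Lemma Tcat_refl G : Tcat G -> forall x, qk ⊑ ts G (eta x) x.
Proof. intros [HG _]; auto. Qed.

Lemma Tcat_trans G : Tcat G -> forall X y z, Tx (ts G) X y ⊗ ts G y z ⊑ ts G (mu X) z.
Proof. intros [_ HG] X y z. eapply qle_trans; [|apply HG]. apply kcomp_ub_Txi; auto. Qed.

Lemma Tcat_intro G : (forall x, qk ⊑ ts G (eta x) x) ->
  (forall X y z, Tx (ts G) X y ⊗ ts G y z ⊑ ts G (mu X) z) -> Tcat G.
Proof. intros H1 H2. split; auto. intros x z. apply kcomp_le_Txi. intros X y <-; auto. Qed.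

Lemma Tcat_trans_eta G : Tcat G -> forall x y z, ts G x y ⊗ ts G (eta y) z ⊑ ts G x z.
Proof.
  intros HG x y z. rewrite <- (mu_eta_l M _ x) at 2.
  eapply qle_trans; [|apply Tcat_trans; auto]. apply qtens_mono_l, Txi_eta.
Qed.

Lemma subgraph_Tcat G (P : tc G -> Prop) : Tcat G -> Tcat (subgraph Q M G P).
Proof.
  intros HG. apply Tcat_intro.
  - intros x; simpl. rewrite eta_nat. apply Tcat_refl; auto.
  - intros X y z; simpl. rewrite mu_nat.
    eapply qle_trans; [|apply Tcat_trans; auto]. apply qtens_mono_l.
    apply (Txi_fmap _ _ _ _ (ts G)).
Qed.

Lemma kcomp_refl_l G B (p : vrel Q (TT (tc G)) B) x y : Tcat G -> p x y ⊑ kc (ts G) p x y.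
Proof.
  intros HG.
  eapply qle_trans; [|apply (kcomp_ub_Txi _ _ _ _ _ (fmap eta x) x x); apply (mu_eta_r M)].
  rewrite <- (qtens_unit (p x y)) at 1. apply qtens_mono_l.
  rewrite <- (xi_const _ qk x). apply Txi_pair_id. intros; apply Tcat_refl; auto.
Qed.

Lemma kcomp_refl_r A H (p : vrel Q (TT A) (tc H)) x y : Tcat H -> p x y ⊑ kc p (ts H) x y.
Proof.
  intros HH.
  eapply qle_trans; [|apply (kcomp_ub_Txi _ _ _ _ _ (eta x) x (eta y)); apply (mu_eta_l M)].
  rewrite <- (qtens_unit_r _ (p x y)) at 1.
  apply qtens_mono; [apply Txi_eta | apply Tcat_refl; auto].
Qed.

Lemma module_unit_r G H (p : vrel Q (TT (tc G)) (tc H)) x y :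
  Tcat H -> is_module Q M xi G H p -> kc p (ts H) x y = p x y.
Proof. intros HH [_ Hp]. apply qle_antisym; [apply Hp | apply kcomp_refl_r; auto]. Qed.

Lemma module_kcomp A B C (p : vrel Q (TT (tc A)) (tc B)) (q : vrel Q (TT (tc B)) (tc C)) :
  is_module Q M xi A B p -> is_module Q M xi B C q -> is_module Q M xi A C (kc p q).
Proof.
  intros [Hp _] [_ Hq]. split; intros x y.
  - rewrite <- kcomp_assoc. apply kcomp_mono_l. intros; apply Hp.
  - rewrite kcomp_assoc. apply kcomp_mono_r. intros; apply Hq.
Qed.

Lemma iso_fmap_str G f : Tcat G -> (forall yy x, ts G yy (f x) = ts G yy x) ->
  forall xx y, ts G (fmap f xx) y = ts G xx y.
Proof.
  intros HG Hf xx y. apply qle_antisym.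
  - rewrite <- (mu_eta_r M _ xx) at 2. eapply qle_trans; [|apply Tcat_trans; auto].
    rewrite <- (qtens_unit (ts G _ y)) at 1. apply qtens_mono_l.
    rewrite <- (xi_const _ qk xx). apply Txi_pair.
    intros a. rewrite Hf. apply Tcat_refl; auto.
  - assert (Hmu_f : mu (fmap (fun a => eta (f a)) xx) = fmap f xx).
    { rewrite <- fmap_fmap. apply (mu_eta_r M). }
    rewrite <- Hmu_f. eapply qle_trans; [|apply Tcat_trans; auto].
    rewrite <- (qtens_unit (ts G xx y)) at 1. apply qtens_mono_l.
    rewrite <- (xi_const _ qk xx). apply Txi_pair_id.
    intros a. rewrite <- Hf. apply Tcat_refl; auto.
Qed.

Lemma flow_module G H f : Tcat H -> Tfunctor Q M G H f -> is_module Q M xi G H (fl G H f).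
Proof.
  intros HH Hf. split; intros x z; apply kcomp_le_Txi; intros X y <-; unfold flow;
    rewrite mu_nat; (eapply qle_trans; [|apply Tcat_trans; auto]); apply qtens_mono_l.
  - eapply qle_trans; [|apply Txi_fmap]. apply Txi_mono. apply Hf.
  - apply (Txi_fmap_l _ _ _ (ts H)).
Qed.

Lemma fup_module G H f : Tcat H -> Tfunctor Q M G H f -> is_module Q M xi H G (fu G H f).
Proof.
  intros HH Hf. split; intros x z; apply kcomp_le_Txi; intros X y <-; unfold fup.
  - apply Tcat_trans; auto.
  - eapply qle_trans; [|apply Tcat_trans; auto].
    apply qtens_mono; [apply (Txi_fmap_r _ _ _ (ts H)) | apply Hf].
Qed.

Lemma flow_fup_unit G H f x z : Tcat H -> Tfunctor Q M G H f ->
  ts G x z ⊑ kc (fl G H f) (fu G H f) x z.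
Proof.
  intros HH Hf.
  eapply qle_trans; [|apply (kcomp_ub_Txi _ _ _ _ _ (fmap eta x) x (fmap f x)); apply (mu_eta_r M)].
  rewrite <- (qtens_unit (ts G x z)) at 1. apply qtens_mono; [|apply Hf].
  rewrite <- (xi_const _ qk x). apply Txi_pair.
  intros a. unfold flow. rewrite eta_nat. apply Tcat_refl; auto.
Qed.

Lemma fup_flow_counit G H f y y' : Tcat H -> kc (fu G H f) (fl G H f) y y' ⊑ ts H y y'.
Proof.
  intros HH. apply kcomp_le_Txi; intros Y a <-. unfold flow, fup.
  eapply qle_trans; [|apply Tcat_trans; auto]. apply qtens_mono_l.
  apply (Txi_fmap_r _ _ _ (ts H)).
Qed.

Lemma kcomp_flow G H f C (p : vrel Q (TT (tc H)) C) x c :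
  Tcat H -> (forall y c, kc (ts H) p y c ⊑ p y c) ->
  kc (fl G H f) p x c = p (fmap f x) c.
Proof.
  intros HH Hp. apply qle_antisym.
  - apply kcomp_le_Txi; intros X y <-. rewrite mu_nat.
    eapply qle_trans; [|apply Hp]. eapply qle_trans; [|apply kcomp_ub_Txi; reflexivity].
    apply qtens_mono_l. apply (Txi_fmap_l _ _ _ (ts H)).
  - eapply qle_trans;
      [|apply (kcomp_ub_Txi _ _ _ _ _ (fmap eta x) x (fmap f x)); apply (mu_eta_r M)].
    rewrite <- (qtens_unit (p _ c)) at 1. apply qtens_mono_l.
    rewrite <- (xi_const _ qk x). apply Txi_pair.
    intros a. unfold flow. rewrite eta_nat. apply Tcat_refl; auto.
Qed.

Lemma fully_faithful_flow_fup A B i x a : Tcat B -> Tfunctor Q M A B i ->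
  fully_faithful Q M A B i -> kc (fl A B i) (fu A B i) x a = ts A x a.
Proof.
  intros HB Hi Hff. rewrite kcomp_flow by (auto; intros; apply fup_module; auto).
  unfold fup. symmetry; apply Hff.
Qed.

Lemma adjoint_fup_flow Z X (phi : vrel Q (TT (tc Z)) (tc X)) psi f :
  Tcat Z -> Tcat X -> is_module Q M xi Z X phi -> adjoint Q M xi Z X phi psi ->
  (forall xx z, psi xx z = fu Z X f xx z) ->
  Tfunctor Q M Z X f /\ (forall zz x, phi zz x = fl Z X f zz x).
Proof.
  intros HZ HX [_ Hphi] [Hunit Hcounit] Hpsi. unfold fup, flow in *.
  assert (Hphi_k : forall z, qk ⊑ phi (eta z) (f z)).
  { intros z. eapply qle_trans; [apply (Tcat_refl _ HZ z)|].
    eapply qle_trans; [apply Hunit|].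
    apply kcomp_le_Txi; intros XX y HXX. rewrite Hpsi.
    eapply qle_trans; [|apply Hphi]. apply kcomp_ub_Txi; auto. }
  assert (Hphi_f : forall zz x, phi zz x = ts X (fmap f zz) x).
  { intros zz x. apply qle_antisym.
    - eapply qle_trans; [|apply Hcounit].
      assert (Hmu_f : mu (fmap (fun z => eta (f z)) zz) = fmap f zz).
      { rewrite <- fmap_fmap. apply (mu_eta_r M). }
      eapply qle_trans; [|apply (kcomp_ub_Txi _ _ _ _ _ (fmap (fun z => eta (f z)) zz) _ zz);
                         exact Hmu_f].
      rewrite <- (qtens_unit (phi zz x)) at 1. apply qtens_mono_l.
      rewrite <- (xi_const _ qk zz). apply Txi_pair_id.
      intros z. rewrite Hpsi. apply Tcat_refl; auto.
    - eapply qle_trans; [|apply Hphi].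
      eapply qle_trans;
        [|apply (kcomp_ub_Txi _ _ _ _ _ (fmap eta zz) zz (fmap f zz)); apply (mu_eta_r M)].
      rewrite <- (qtens_unit (ts X _ x)) at 1. apply qtens_mono_l.
      rewrite <- (xi_const _ qk zz). apply Txi_pair. apply Hphi_k. }
  split; [|exact Hphi_f].
  intros zz z. eapply qle_trans; [apply Hunit|]. apply kcomp_le_Txi; intros XX y <-.
  rewrite Hpsi, mu_nat. eapply qle_trans; [|apply Tcat_trans; auto]. apply qtens_mono_l.
  eapply qle_trans; [|apply (Txi_fmap_l _ _ _ (ts X) (fmap f))].
  apply Txi_mono. intros a c. rewrite Hphi_f. apply qle_refl.
Qed.

Lemma L_equivalence_adjoint A B X i h :
  Tcat A -> Tcat B -> Tcat X -> Tfunctor Q M A B i -> Tfunctor Q M A X h ->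
  L_equivalence Q M xi A B i ->
  adjoint Q M xi B X (kc (fu A B i) (fl A X h)) (kc (fu A X h) (fl A B i)).
Proof.
  intros HA HB HX Hi Hh [Hff Hd]. split; intros x y.
  - rewrite <- Hd, kcomp_assoc. apply kcomp_mono_r. intros x' y'.
    rewrite <- kcomp_assoc. eapply qle_trans; [apply kcomp_refl_l; auto|].
    apply kcomp_mono_l. intros; apply flow_fup_unit; auto.
  - rewrite kcomp_assoc. eapply qle_trans; [|apply (fup_flow_counit A X h); auto].
    apply kcomp_mono_r. intros x' y'. rewrite <- kcomp_assoc.
    eapply qle_trans; [|apply (proj1 (flow_module _ _ _ HX Hh))].
    apply kcomp_mono_l. intros a a'. rewrite fully_faithful_flow_fup; auto. apply qle_refl.
Qed.

Lemma L_complete_injective X : Tcat X -> L_complete Q M xi X -> L_injective Q M xi X.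
Proof.
  intros HX HC A B HA HB i Hi HL h Hh.
  destruct (HC B HB (kc (fu A B i) (fl A X h)) (kc (fu A X h) (fl A B i)))
    as [g [Hg [_ Hgpsi]]].
  - apply module_kcomp; [apply fup_module | apply flow_module]; auto.
  - apply module_kcomp; [apply fup_module | apply flow_module]; auto.
  - apply L_equivalence_adjoint; auto.
  - exists g. split; auto.
    assert (Hgi : forall y a, ts X y (g (i a)) = ts X y (h a)).
    { intros y a. change (ts X y (g (i a))) with (fu B X g y (i a)). rewrite <- Hgpsi.
      rewrite (kcomp_ext_r _ _ _ _ (fu A X h) (fl A B i) (ts A) y (i a) a)
        by (intros; symmetry; apply (proj1 HL)).
      apply module_unit_r, fup_module; auto. }
    split; intros y a; simpl; unfold fup; rewrite Hgi; apply qle_refl.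
Qed.

(** * The Yoneda embedding into tight presheaves *)

Section Yoneda.
Variable X : Tgraph Q M.
Hypothesis HX : Tcat X.
Local Notation C := (homV_car Q M xi X).
Local Notation H := (ts (homV Q M xi X)).
Local Notation ev := (@ev Q M xi X).
Local Notation Xt := (Xtilde Q M xi X).
Local Notation b := (ts X).
Local Notation pp w := (proj1_sig (proj1_sig w)).

Lemma homV_lax (h : C) XX : xi (fmap (proj1_sig h) XX) ⊑ proj1_sig h (mu XX).
Proof.
  destruct h as [h Hh]; simpl. rewrite <- (qtens_unit (xi _)). apply qhom_elim.
  eapply qle_trans; [|exact (Hh XX (mu XX))]. apply qsup_ub. split; auto.
Qed.

Lemma absT_intro (g : TT (tc X) -> Q) :
  (forall XX, xi (fmap g XX) ⊑ g (mu XX)) -> Tfunctor Q M (absT Q M X) (Vgraph Q M xi) g.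
Proof.
  intros Hg XX x. simpl. apply qsup_least. intros v [<- ->].
  apply qhom_intro. rewrite qtens_unit; auto.
Qed.

Lemma homV_le p (h : C) q : fmap snd q = p ->
  H p h ⊗ xi (fmap ev q) ⊑ proj1_sig h (mu (fmap fst q)).
Proof. intros Hq. apply qhom_elim, qinf_lb. exists q; auto. Qed.

Lemma homV_ge p (h : C) u :
  (forall q, fmap snd q = p -> u ⊗ xi (fmap ev q) ⊑ proj1_sig h (mu (fmap fst q))) ->
  u ⊑ H p h.
Proof. intros Hq. apply qinf_intro. intros s [q [Hp ->]]. apply qhom_intro; auto. Qed.

Lemma homV_refl h : qk ⊑ H (eta h) h.
Proof.
  apply homV_ge; intros q Hq. rewrite qtens_unit.
  rewrite (fmap_ext_fiber_eta _ Hwpb _ _ _ snd q h ev (fun p => proj1_sig h (fst p))) by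
    (auto; intros [a c] Hc; simpl in *; subst; auto).
  rewrite <- fmap_fmap. apply homV_lax.
Qed.

(* Same gluing of weak pullbacks as in [sharp_kcomp_ge]. *)
Lemma homV_trans PP p h : Tx H PP p ⊗ H p h ⊑ H (mu PP) h.
Proof.
  apply Txi_le_tens; intros w Hw1 Hw2. apply homV_ge; intros q Hq.
  destruct (Hmu _ _ snd q PP Hq) as [Q' [HQ1 HQ2]].
  rewrite <- Hw1 in HQ2.
  destruct (Hwpb _ _ _ (fmap snd) fst Q' w HQ2) as [Om [HO1 HO2]].
  set (q2 := fmap (fun o => (mu (fmap fst (fst (proj1_sig o))), snd (snd (proj1_sig o)))) Om).
  assert (Hq2_snd : fmap snd q2 = p).
  { unfold q2. rewrite fmap_fmap, <- Hw2, <- HO2, fmap_fmap. reflexivity. }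
  assert (Hq2_mu : mu (fmap fst q2) = mu (fmap fst q)).
  { transitivity (mu (fmap mu (fmap (fmap fst) Q'))).
    { f_equal. unfold q2. rewrite <- HO1, !fmap_fmap. reflexivity. }
    rewrite <- mu_assoc, <- mu_nat, HQ1; auto. }
  assert (Hq2_ev : xi (fmap (ua H) w) ⊗ xi (fmap ev q) ⊑ xi (fmap ev q2)).
  { assert (Hxi_q : xi (fmap ev q) = xi (fmap (fun o => xi (fmap ev (fst (proj1_sig o)))) Om)).
    { rewrite <- HQ1, mu_nat, <- (xi_mu _ _ _ Hxi), fmap_fmap, <- HO1, fmap_fmap.
      reflexivity. }
    assert (Hxi_w : xi (fmap (ua H) w) = xi (fmap (fun o => ua H (snd (proj1_sig o))) Om)).
    { rewrite <- HO2, fmap_fmap. reflexivity. }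
    rewrite Hxi_q, Hxi_w, <- xi_fmap_tens. unfold q2. rewrite fmap_fmap. apply xi_mono.
    intros [[rho [pc c]] Hr]; simpl in *. apply homV_le; auto. }
  rewrite <- Hq2_mu. eapply qle_trans; [|apply (homV_le p h q2 Hq2_snd)].
  rewrite <- qtens_assoc, (qtens_comm (xi _)), <- qtens_assoc. apply qtens_mono_r.
  rewrite qtens_comm. exact Hq2_ev.
Qed.

Lemma homV_Tcat : Tcat (homV Q M xi X).
Proof. apply Tcat_intro; [apply homV_refl | apply homV_trans]. Qed.

Lemma Xtilde_Tcat : Tcat Xt.
Proof. apply subgraph_Tcat, subgraph_Tcat, homV_Tcat. Qed.

Lemma Xop_intro (g : TT (tc X) -> Q) :
  (forall BB a, Tx b BB a ⊗ g a ⊑ g (mu BB)) ->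
  Tfunctor Q M (Xop Q M xi X) (Vgraph Q M xi) g.
Proof.
  intros Hg XX y. simpl. rewrite Txi_eta_r. apply qhom_intro.
  rewrite <- xi_fmap_tens, <- (xi_const _ (g y) XX). apply xi_mono.
  intros a. unfold rconv, op_r. apply qtens_sup_le_l. intros v [BB [<- ->]]. auto.
Qed.

Lemma Xop_elim (g : TT (tc X) -> Q) : Tfunctor Q M (Xop Q M xi X) (Vgraph Q M xi) g ->
  forall BB a, Tx b BB a ⊗ g a ⊑ g (mu BB).
Proof.
  intros Hg BB a. pose proof (Hg (eta a) (mu BB)) as Hop. simpl in Hop.
  rewrite eta_nat, (xi_eta _ _ _ Hxi) in Hop. apply qhom_elim.
  eapply qle_trans; [|exact Hop]. eapply qle_trans; [|apply Txi_eta].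
  unfold rconv, op_r. apply qsup_ub. exists BB; auto.
Qed.

(* Tightness of [psi] is witnessed by the value [phi0] of its left adjoint at the
   point of [E]: the unit and counit become the two inequalities below. *)
Lemma tight_intro (psi : tc (Xhat Q M xi X)) (phi0 : tc X -> Q) :
  (forall xx x, xi (fmap phi0 xx) ⊗ b xx x ⊑ phi0 x) ->
  qk ⊑ qsup (fun v => exists xx, v = xi (fmap phi0 xx) ⊗ proj1_sig (proj1_sig psi) xx) ->
  (forall xx x, proj1_sig (proj1_sig psi) xx ⊗ phi0 x ⊑ b xx x) ->
  tight Q M xi X psi.
Proof.
  intros Hmod Hunit Hcounit. exists (fun _ x => phi0 x). split; [split|split]; intros u x.
  - apply kcomp_le_Txi; intros XX y _. simpl.
    eapply qle_trans; [apply qtens_mono_l, Txi_const_k|]. rewrite qtens_unit; apply qle_refl.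
  - apply kcomp_le_Txi; intros XX y _. eapply qle_trans; [|apply (Hmod y)].
    apply qtens_mono_l. apply Txi_const_l_le.
  - simpl. eapply qle_trans; [apply Hunit|]. apply qsup_least; intros v [xx ->].
    eapply qle_trans; [|apply (kcomp_ub_Txi _ _ _ _ _ (eta u) u xx); apply (mu_eta_l M)].
    rewrite Txi_const_l. apply qle_refl.
  - apply kcomp_le_Txi; intros XX uu <-. unfold as_module. rewrite Txi_unit_r.
    eapply qle_trans; [|apply Hcounit]. apply qtens_mono_l. apply homV_lax.
Qed.

Lemma tight_elim (psi : tc (Xhat Q M xi X)) : tight Q M xi X psi ->
  exists phi0 : tc X -> Q,
  qk ⊑ qsup (fun v => exists xx, v = xi (fmap phi0 xx) ⊗ proj1_sig (proj1_sig psi) xx) /\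
  (forall xx x, proj1_sig (proj1_sig psi) xx ⊗ phi0 x ⊑ b xx x).
Proof.
  intros [phi [_ [Hunit Hcounit]]]. exists (phi (eta tt)). split.
  - eapply qle_trans; [apply (Hunit (eta tt) tt)|]. apply kcomp_le; intros xx.
    eapply qle_trans; [|apply qsup_ub; exists xx; reflexivity]. apply qtens_mono_l.
    apply sharp_le; intros XX _.
    rewrite (TTunit_eq _ HT1 XX (eta (eta tt))), Txi_eta_l. apply qle_refl.
  - intros xx x. eapply qle_trans; [|apply Hcounit].
    eapply qle_trans; [|apply (kcomp_ub_Txi _ _ _ _ _ (eta xx) xx (eta tt)); apply (mu_eta_l M)].
    apply qtens_mono_l. apply (Txi_eta _ _ (as_module Q M xi X psi)).
Qed.

Lemma yoneda_absT x : Tfunctor Q M (absT Q M X) (Vgraph Q M xi) (yoneda Q M X x).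
Proof.
  apply absT_intro; intros XX. unfold yoneda. rewrite <- Txi_eta_r.
  eapply qle_trans; [|apply Tcat_trans; auto].
  rewrite <- (qtens_unit_r _ (Tx b XX (eta x))) at 1.
  apply qtens_mono_r, Tcat_refl; auto.
Qed.

Definition yoneda_homV (x : tc X) : C := exist _ (yoneda Q M X x) (yoneda_absT x).

Lemma yoneda_Xop x : Tfunctor Q M (Xop Q M xi X) (Vgraph Q M xi) (yoneda Q M X x).
Proof. apply Xop_intro. intros; apply Tcat_trans; auto. Qed.

Definition yoneda_hat (x : tc X) : tc (Xhat Q M xi X) :=
  exist _ (yoneda_homV x) (yoneda_Xop x).

Lemma yoneda_tight x : tight Q M xi X (yoneda_hat x).
Proof.
  apply (tight_intro _ (fun x' => b (eta x) x')); simpl; unfold yoneda.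
  - intros xx x'. rewrite <- Txi_eta_l. eapply qle_trans; [apply Tcat_trans; auto|].
    rewrite (mu_eta_l M). apply qle_refl.
  - eapply qle_trans; [|apply qsup_ub; exists (eta x); reflexivity].
    rewrite eta_nat, (xi_eta _ _ _ Hxi), <- (qtens_unit qk) at 1.
    apply qtens_mono; apply Tcat_refl; auto.
  - intros; apply Tcat_trans_eta; auto.
Qed.

Definition yoneda_tilde (x : tc X) : tc Xt := exist _ (yoneda_hat x) (yoneda_tight x).

(* [g] need not be [yoneda_homV]: in [tight_represented] it comes from an
   arbitrary [yt] whose values agree with the representables only as functions. *)
Lemma yoneda_lemma (g : tc X -> C) (Hg : forall x yy, proj1_sig (g x) yy = b yy x)
  (psi : C) (Hpsi : forall BB a, Tx b BB a ⊗ proj1_sig psi a ⊑ proj1_sig psi (mu BB)) xx :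
  proj1_sig psi xx = H (fmap g xx) psi.
Proof.
  apply qle_antisym.
  - apply homV_ge; intros q Hq.
    destruct (Hwpb _ _ _ snd g q xx Hq) as [W [HW1 HW2]].
    assert (Hev : xi (fmap ev q) ⊑ Tx b (fmap fst q) xx).
    { eapply qle_trans; [|apply (Txi_ub _ _ b
        (fmap (fun o => (fst (fst (proj1_sig o)), snd (proj1_sig o))) W))].
      - rewrite <- HW1, !fmap_fmap. apply xi_mono.
        intros [[[a c] x] Ho]; simpl in *. unfold Defs.ev; simpl.
        rewrite Ho, Hg. apply qle_refl.
      - rewrite <- HW1, !fmap_fmap. reflexivity.
      - rewrite <- HW2, !fmap_fmap. reflexivity. }
    rewrite qtens_comm. eapply qle_trans; [|apply Hpsi]. apply qtens_mono_l; exact Hev.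
  - set (q := fmap (fun x => ((eta x : TT (tc X)), g x)) xx).
    assert (Hq : mu (fmap fst q) = xx).
    { unfold q. rewrite fmap_fmap. apply (mu_eta_r M). }
    rewrite <- Hq at 2. eapply qle_trans; [|apply homV_le].
    2: { unfold q; rewrite fmap_fmap; reflexivity. }
    rewrite <- (qtens_unit_r _ (H _ psi)) at 1. apply qtens_mono_r.
    unfold q. rewrite fmap_fmap. apply xi_ge_k. intros a; simpl. unfold Defs.ev; simpl.
    rewrite Hg. apply Tcat_refl; auto.
Qed.

Lemma Xtilde_str p (w : tc Xt) : ts Xt p w = H (fmap (fun w : tc Xt => pp w) p) (pp w).
Proof. simpl. rewrite fmap_fmap. reflexivity. Qed.

Lemma Xtilde_op (w : tc Xt) :
  forall BB a, Tx b BB a ⊗ proj1_sig (pp w) a ⊑ proj1_sig (pp w) (mu BB).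
Proof. apply Xop_elim. exact (proj2_sig (proj1_sig w)). Qed.

Lemma Xtilde_str_yoneda xx (w : tc Xt) :
  ts Xt (fmap yoneda_tilde xx) w = proj1_sig (pp w) xx.
Proof.
  rewrite Xtilde_str, fmap_fmap. symmetry.
  apply (yoneda_lemma yoneda_homV (fun x yy => eq_refl) (pp w) (Xtilde_op w)).
Qed.

Lemma left_adjoint_le_homV (psi : C) (phi0 : tc X -> Q)
  (Hc : forall xx x, proj1_sig psi xx ⊗ phi0 x ⊑ b xx x)
  (g : tc X -> C) (Hg : forall x yy, proj1_sig (g x) yy = b yy x) x :
  phi0 x ⊑ H (eta psi) (g x).
Proof.
  apply homV_ge; intros q Hq. rewrite Hg.
  rewrite (fmap_ext_fiber_eta _ Hwpb _ _ _ snd q psi ev (fun p => proj1_sig psi (fst p))) by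
    (auto; intros [a c] Hac; simpl in *; subst; reflexivity).
  rewrite <- fmap_fmap, qtens_comm. eapply qle_trans; [|apply Hc].
  apply qtens_mono_l, homV_lax.
Qed.

Lemma yoneda_tilde_fully_faithful : fully_faithful Q M X Xt yoneda_tilde.
Proof. intros xx x. rewrite Xtilde_str_yoneda. reflexivity. Qed.

Lemma yoneda_tilde_Tfunctor : Tfunctor Q M X Xt yoneda_tilde.
Proof. intros xx x. rewrite yoneda_tilde_fully_faithful. apply qle_refl. Qed.

(* The unit of the left adjoint of a tight [w] exhibits [w] as a join of
   representables weighted by [phi0]. *)
Lemma yoneda_tilde_dense : L_dense Q M xi X Xt yoneda_tilde.
Proof.
  intros p w. apply qle_antisym; [apply fup_flow_counit, Xtilde_Tcat|].
  destruct (tight_elim _ (proj2_sig w)) as [phi0 [Hunit Hcounit]].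
  rewrite Xtilde_str. set (hom_pw := H _ _).
  rewrite <- (qtens_unit_r _ hom_pw). eapply qle_trans; [apply qtens_mono_r; exact Hunit|].
  apply qtens_sup_le_r; intros s [xx ->]. rewrite qtens_assoc.
  eapply qle_trans; [|apply (kcomp_ub _ _ _ _ (flow Q M X Xt yoneda_tilde) p xx w)].
  apply qtens_mono.
  - eapply qle_trans; [|apply (sharp_ub _ _ _ (eta p)); apply (mu_eta_l M)].
    rewrite Txi_eta_l, <- xi_tens_const. apply xi_mono. intros x. unfold fup.
    rewrite (Xtilde_str p (yoneda_tilde x)).
    eapply qle_trans; [|apply (Tcat_trans_eta _ homV_Tcat _ (pp w))]. apply qtens_mono_r.
    apply (left_adjoint_le_homV (pp w) phi0 Hcounit yoneda_homV (fun _ _ => eq_refl)).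
  - unfold flow. rewrite Xtilde_str_yoneda. apply qle_refl.
Qed.

Definition yoneda_retract : Prop :=
  exists R : tcar Q M Xt -> tcar Q M X,
    Tfunctor Q M Xt X R /\
    exists yt : tcar Q M X -> tcar Q M Xt,
      (forall x xx, tilde_fun Q M xi X (yt x) xx = yoneda Q M X x xx) /\
      fiso Q M X X (fun x => R (yt x)) (fun x => x).

Lemma L_injective_yoneda_retract : L_injective Q M xi X -> yoneda_retract.
Proof.
  intros HI.
  assert (Hid : Tfunctor Q M X X (fun x => x)).
  { intros xx x. rewrite (fmap_id M). apply qle_refl. }
  destruct (HI X Xt HX Xtilde_Tcat yoneda_tilde yoneda_tilde_Tfunctor
              (conj yoneda_tilde_fully_faithful yoneda_tilde_dense) (fun x => x) Hid)
    as [R [HR Hiso]].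
  exists R. split; auto. exists yoneda_tilde. split; [reflexivity | exact Hiso].
Qed.

Lemma tight_represented (R : tc Xt -> tc X) (yt : tc X -> tc Xt) :
  Tfunctor Q M Xt X R -> (forall x xx, tilde_fun Q M xi X (yt x) xx = yoneda Q M X x xx) ->
  fiso Q M X X (fun x => R (yt x)) (fun x => x) ->
  forall w xx, tilde_fun Q M xi X w xx = b xx (R w).
Proof.
  intros HR Hy [HRy1 HRy2] w xx.
  assert (HRy : forall yy x, b yy (R (yt x)) = b yy x).
  { intros yy x. apply qle_antisym; [apply HRy1 | apply HRy2]. }
  destruct (tight_elim _ (proj2_sig w)) as [phi0 [Hunit Hcounit]].
  assert (Hphi0 : forall x, phi0 x ⊑ b (eta (R w)) x).
  { intros x. eapply qle_trans;
      [apply (left_adjoint_le_homV (pp w) phi0 Hcounit (fun x => pp (yt x)) Hy)|].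
    pose proof (HR (eta w) (yt x)) as HRx.
    rewrite Xtilde_str, !eta_nat, HRy in HRx. exact HRx. }
  assert (Hk : qk ⊑ tilde_fun Q M xi X w (eta (R w))).
  { eapply qle_trans; [apply Hunit|]. apply qsup_least; intros v [yy ->].
    rewrite <- (mu_eta_l M _ (eta (R w))). eapply qle_trans; [|apply Xtilde_op].
    apply qtens_mono_l. rewrite Txi_eta_l. apply xi_mono. apply Hphi0. }
  apply qle_antisym.
  - unfold tilde_fun. rewrite (yoneda_lemma (fun x => pp (yt x)) Hy (pp w) (Xtilde_op w)).
    pose proof (HR (fmap yt xx) w) as HRxx.
    rewrite Xtilde_str, !fmap_fmap, iso_fmap_str in HRxx; auto.
  - rewrite <- (qtens_unit_r _ (b xx (R w))). eapply qle_trans; [apply qtens_mono_r, Hk|].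
    rewrite <- (mu_eta_l M _ xx) at 2. eapply qle_trans; [|apply Xtilde_op].
    apply qtens_mono_l, Txi_eta.
Qed.

Section Column.
Variable Z : Tgraph Q M.
Hypothesis HZ : Tcat Z.
Variable phi : vrel Q (TT (tc Z)) (tc X).
Variable psi : vrel Q (TT (tc X)) (tc Z).
Hypothesis Hphi : is_module Q M xi Z X phi.
Hypothesis Hpsi : is_module Q M xi X Z psi.
Hypothesis Hadj : adjoint Q M xi Z X phi psi.

Lemma module_column_hat z :
  {c : tc (Xhat Q M xi X) | forall xx, proj1_sig (proj1_sig c) xx = psi xx z}.
Proof.
  assert (Hlax : forall XX, xi (fmap (fun xx => psi xx z) XX) ⊑ psi (mu XX) z).
  { intros XX. rewrite <- Txi_eta_r, <- (qtens_unit_r _ (Tx psi XX (eta z))).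
    eapply qle_trans; [|apply (proj2 Hpsi)]. eapply qle_trans; [|apply kcomp_ub_Txi; reflexivity].
    apply qtens_mono_r, Tcat_refl; auto. }
  assert (Hop : forall BB a, Tx b BB a ⊗ psi a z ⊑ psi (mu BB) z).
  { intros BB a. eapply qle_trans; [|apply (proj1 Hpsi)]. apply kcomp_ub_Txi; reflexivity. }
  exists (exist _ (exist _ (fun xx => psi xx z) (absT_intro _ Hlax)) (Xop_intro _ Hop)).
  reflexivity.
Qed.

Lemma adjoint_column_tilde z : {w : tc Xt | forall xx, tilde_fun Q M xi X w xx = psi xx z}.
Proof.
  destruct (module_column_hat z) as [c Hc].
  assert (Htight : tight Q M xi X c).
  { destruct Hadj as [Hunit Hcounit].
    apply (tight_intro _ (phi (eta z))); rewrite ?Hc.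
    - intros xx x. rewrite <- Txi_eta_l. eapply qle_trans; [|apply (proj2 Hphi)].
      apply kcomp_ub_Txi, (mu_eta_l M).
    - eapply qle_trans; [apply (Tcat_refl _ HZ z)|]. eapply qle_trans; [apply Hunit|].
      apply kcomp_le_Txi; intros XX y HXX.
      rewrite (mu_eq_eta _ HT1 Hmu _ _ _ HXX), Txi_eta_l.
      apply qsup_ub. exists y. rewrite Hc. reflexivity.
    - intros xx x. rewrite Hc. eapply qle_trans; [|apply Hcounit].
      eapply qle_trans; [|apply (kcomp_ub_Txi _ _ _ _ _ (eta xx) xx (eta z)); apply (mu_eta_l M)].
      apply qtens_mono_l, Txi_eta. }
  exists (exist _ c Htight). exact Hc.
Qed.

End Column.

Lemma yoneda_retract_L_complete : yoneda_retract -> L_complete Q M xi X.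
Proof.
  intros [R [HR [yt [Hy Hiso]]]] Z HZ phi psi Hphi Hpsi Hadj.
  set (f := fun z => R (proj1_sig (adjoint_column_tilde Z HZ phi psi Hphi Hpsi Hadj z))).
  assert (Hpsif : forall xx z, psi xx z = fup Q M Z X f xx z).
  { intros xx z. unfold fup, f.
    rewrite <- (tight_represented R yt HR Hy Hiso).
    rewrite (proj2_sig (adjoint_column_tilde _ _ _ _ _ _ _ z)).
    reflexivity. }
  destruct (adjoint_fup_flow Z X phi psi f HZ HX Hphi Hadj Hpsif) as [Hf Hphif].
  exists f. auto.
Qed.

End Yoneda.

End LaxExtension.

Theorem mainTheorem16 (Q : quantale) (M : monad) (xi : T M Q -> Q)
  (HT1 : T_one M) (Hwpb : T_weak_pullbacks M) (Hmu : mu_weak_pullbacks M)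
  (Hxi : strict_topological_theory Q M xi)
  (X : Tgraph Q M) (HX : is_Tcat Q M xi X) :
  (L_complete Q M xi X <-> L_injective Q M xi X) /\
  (L_complete Q M xi X <->
     exists R : tcar Q M (Xtilde Q M xi X) -> tcar Q M X,
       Tfunctor Q M (Xtilde Q M xi X) X R /\
       exists yt : tcar Q M X -> tcar Q M (Xtilde Q M xi X),
         (forall x xx, tilde_fun Q M xi X (yt x) xx = yoneda Q M X x xx) /\
         fiso Q M X X (fun x => R (yt x)) (fun x => x)).
Proof.
  pose proof (L_complete_injective Q M xi HT1 Hwpb Hmu Hxi X HX).
  pose proof (L_injective_yoneda_retract Q M xi HT1 Hwpb Hmu Hxi X HX).
  pose proof (yoneda_retract_L_complete Q M xi HT1 Hwpb Hmu Hxi X HX).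
  unfold yoneda_retract in *. tauto.
Qed.
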